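(* There is a constant $C(\mathcal{X})<\infty$ such that for every $\rho_A\in\mathcal{P}(\mathcal{X})$ there exists a trajectory $(\rho,m)\in\mathcal{CE}(\rho_A,\mathbb{1})$ with continuous $\rho$ and $\mathcal{A}(\rho,m)\le C(\mathcal{X})$, such that moreover for every $h=1/N$, $N\in\mathbb{N}$, one has $(\mathcal{I}_h\rho,\mathrm{avg}_h m)\in\mathcal{CE}_h(\rho_A,\mathbb{1})$ and $\mathcal{A}_h(\mathcal{I}_h\rho,\mathrm{avg}_h m)\le C(\mathcal{X})$. Here $\mathbb{1}\in\mathcal{P}(\mathcal{X})$ is the uniform density $\mathbb{1}(x)=1$.
   Context: Setting: $\mathcal{X}$ finite, $Q:\mathcal{X}\times\mathcal{X}\to[0,\infty)$ with $Q(x,x)=0$, irreducible, reversible with respect to its stationary distribution $\pi>0$, $\sum\pi=1$ ($\pi(x)Q(x,y)=\pi(y)Q(y,x)$). $\mathcal{P}(\mathcal{X})=\{\rho\ge0:\sum_x\pi(x)\rho(x)=1\}$. $\langle\phi,\psi\rangle_\pi=\sum_x\phi\psi\pi$, $\langle\Phi,\Psi\rangle_Q=\frac12\sum_{x,y}\Phi\Psi Q(x,y)\pi(x)$, $(\nabla_{\mathcal{X}}\psi)(x,y)=\psi(x)-\psi(y)$, $(\mathrm{div}_{\mathcal{X}}\Psi)(x)=\frac12\sum_yQ(x,y)(\Psi(y,x)-\Psi(x,y))$. $\theta:[0,\infty)^2\to[0,\infty)$ is continuous, concave, 1-homogeneous, symmetric, $C^\infty$ on $(0,\infty)^2$, $\theta(0,s)=\theta(s,0)=0$,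 $\theta(s,s)=s$, $\theta>0$ on $(0,\infty)^2$, nondecreasing in each argument; $\theta=-\infty$ if an argument is negative. $\alpha(s,t,m)=m^2/\theta(s,t)$ if $\theta(s,t)>0$, $0$ if $\theta(s,t)=0=m$, $+\infty$ otherwise. $\mathcal{A}(\rho,m)=\frac12\int_0^1\sum_{x,y}\alpha(\rho(t,x),\rho(t,y),m(t,x,y))Q(x,y)\pi(x)\,dt$. $\mathcal{CE}(\rho_A,\rho_B)$: measurable pairs $(\rho,m)$ with $\int_0^1\langle\partial_t\varphi,\rho\rangle_\pi+\langle\nabla_{\mathcal{X}}\varphi,m\rangle_Q\,dt=\langle\varphi(1),\rho_B\rangle_\pi-\langle\varphi(0),\rho_A\rangle_\pi$ for all $\varphi\in C^1([0,1],\mathbb{R}^{\mathcal{X}})$. Time discretization: $N\in\mathbb{N}$, $h=1/N$, $t_i=ih$, $I_i=[t_i,t_{i+1})$. $V^1_{n,h}$: continuous $\psi:[0,1]\to\mathbb{R}^{\mathcal{X}}$ affine on each $I_i$; $V^0_{n,h}$, $V^0_{e,h}$: functions $[0,1]\to\mathbb{R}^{\mathcal{X}}$ resp. $\mathbb{R}^{\mathcal{X}\times\mathcal{X}}$ constant on each $I_i$ (value denoted $\psi(t_i)$). For $\psi\in V^1_{n,h}$, $(\partial_t\psi)(t_i)=(\psi(t_{i+1})-\psi(t_i))/h$. $\mathcal{CE}_h(\rho_A,\rho_B)$ is the set of $(\rho_h,m_h)\in V^1_{n,h}\times V^0_{e,h}$ with $\rho_h(t_0)=\rho_A$, $\rho_h(t_N)=\rho_B$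 and $\partial_t\rho_h(t_i)+\mathrm{div}_{\mathcal{X}}m_h(t_i)=0$ for $i=0,\dots,N-1$. $\mathrm{avg}_h$ maps a (vector-valued) measure or integrable function on $[0,1]$ to the element of $V^0_{n,h}$ (resp. $V^0_{e,h}$) whose value on $I_i$ is its average over $I_i$ (so $(\mathrm{avg}_h\psi)(t_i)=\frac12(\psi(t_i)+\psi(t_{i+1}))$ for $\psi\in V^1_{n,h}$). $\mathcal{A}_h(\rho,m)=\mathcal{A}(\mathrm{avg}_h\rho,\mathrm{avg}_hm)$. $\mathcal{I}_h:C^0([0,1],\mathbb{R}^{\mathcal{X}})\to V^1_{n,h}$ is Lagrange interpolation: $(\mathcal{I}_h\rho)(t_i)=\rho(t_i)$, $i=0,\dots,N$. *)

From HB Require Import structures.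
From mathcomp Require Import all_boot all_order all_algebra.
From mathcomp Require Import all_classical all_reals all_analysis.
Set Implicit Arguments. Unset Strict Implicit. Unset Printing Implicit Defensive.
Import Order.TTheory GRing.Theory Num.Theory.
Import numFieldNormedType.Exports.
Local Open Scope classical_set_scope.
Local Open Scope ring_scope.

Section Defs.
Context {R : realType} {X : finType}.

Definition I01 : set R := `[0%R, 1%R].

(* Q >= 0, Q(x,x) = 0, irreducible, reversible w.r.t. pi > 0 with sum pi = 1
   (detailed balance implies that pi is stationary). *)
Definition markov_setting (Q : X -> X -> R) (pi : X -> R) : Prop :=
  (((forall x y, 0 <= Q x y)) /\ ((forall x, Q x x = 0)) /\ ((forall x y, connect [rel a b | 0 < Q a b] x y)) /\ ((forall x, 0 < pi x)) /\ (\sum_x pi x = 1) /\ ((forall x y, pi x * Q x y = pi y * Q y x))).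

Definition density (pi : X -> R) (rho : X -> R) : Prop :=
  (forall x, 0 <= rho x) /\ \sum_x pi x * rho x = 1.

Definition ip_pi (pi : X -> R) (f g : X -> R) : R := \sum_x f x * g x * pi x.
Definition ip_Q (Q : X -> X -> R) (pi : X -> R) (F G : X -> X -> R) : R :=
  2^-1 * \sum_x \sum_y F x y * G x y * Q x y * pi x.
Definition gradX (f : X -> R) : X -> X -> R := fun x y => f x - f y.
Definition divX (Q : X -> X -> R) (F : X -> X -> R) : X -> R :=
  fun x => 2^-1 * \sum_y Q x y * (F y x - F x y).

Definition pd1 (f : R -> R -> R) : R -> R -> R := fun s t => derive1 (fun u => f u t) s.
Definition pd2 (f : R -> R -> R) : R -> R -> R := fun s t => derive1 (fun u => f s u) t.
Fixpoint iter_pd (w : seq bool) (f : R -> R -> R) : R -> R -> R :=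
  match w with
  | [::] => f
  | b :: w' => (if b then pd1 else pd2) (iter_pd w' f)
  end.
Definition smooth_on_pos (f : R -> R -> R) : Prop :=
  forall (w : seq bool) (s t : R), 0 < s -> 0 < t ->
    ((derivable (fun u => iter_pd w f u t) s 1) /\ (derivable (fun u => iter_pd w f s u) t 1) /\ ({for (s, t), continuous (fun p : R * R => iter_pd w f p.1 p.2)})).

Definition mean_fun (th : R -> R -> R) : Prop :=
  (({within [set p : R * R | 0 <= p.1 /\ 0 <= p.2],
         continuous (fun p : R * R => th p.1 p.2)}) /\ (
      (forall s t s' t' l, 0 <= s -> 0 <= t -> 0 <= s' -> 0 <= t' -> 0 <= l <= 1 ->
         l * th s t + (1 - l) * th s' t' <= th (l * s + (1 - l) * s') (l * t + (1 - l) * t'))) /\ (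
      (forall l s t, 0 <= l -> 0 <= s -> 0 <= t -> th (l * s) (l * t) = l * th s t)) /\ (
      (forall s t, 0 <= s -> 0 <= t -> th s t = th t s)) /\ (smooth_on_pos th) /\ ((forall s, 0 <= s -> th 0 s = 0 /\ th s 0 = 0)) /\ ((forall s, 0 <= s -> th s s = s)) /\ ((forall s t, 0 < s -> 0 < t -> 0 < th s t)) /\ ((forall s t, 0 <= s -> 0 <= t -> 0 <= th s t)) /\ (
      (forall s s' t, 0 <= s -> s <= s' -> 0 <= t ->
         th s t <= th s' t /\ th t s <= th t s'))).

(* alpha, with the convention theta = -oo when an argument is negative *)
Definition alpha (th : R -> R -> R) (s t m : R) : \bar R :=
  if (0 <= s) && (0 <= t) then
    if 0 < th s t then ((m ^+ 2) / th s t)%:E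
    else if m == 0 then 0%E else +oo%E
  else +oo%E.

Definition action (Q : X -> X -> R) (pi : X -> R) (th : R -> R -> R)
    (rho : R -> X -> R) (m : R -> X -> X -> R) : \bar R :=
  ((2^-1)%:E * integral (@lebesgue_measure R) I01
     (fun t => \sum_x \sum_y
        (alpha th (rho t x) (rho t y) (m t x y) * (Q x y * pi x)%:E)%E))%E.

(* test functions C^1([0,1], R^X), represented by C^1 functions on R *)
Definition test_fun (phi : R -> X -> R) : Prop :=
  forall x, (forall t, derivable (fun s => phi s x) t 1) /\
            continuous (fun t => derive1 (fun s => phi s x) t).

(* CE(rhoA, rhoB): measurable (and integrable, so that the weak form makes
   sense) pairs satisfying the weak continuity equation. *)
Definition CE (Q : X -> X -> R) (pi : X -> R) (rhoA rhoB : X -> R)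
    (rho : R -> X -> R) (m : R -> X -> X -> R) : Prop :=
  (((forall x, measurable_fun I01 (fun t : R => rho t x))) /\ ((forall x y, measurable_fun I01 (fun t : R => m t x y))) /\ ((forall x, (@lebesgue_measure R).-integrable I01 (fun t : R => (rho t x)%:E))) /\ ((forall x y, (@lebesgue_measure R).-integrable I01 (fun t : R => (m t x y)%:E))) /\ (forall phi, test_fun phi ->
        Rintegral (@lebesgue_measure R) I01
          (fun t => ip_pi pi (fun x => derive1 (fun s => phi s x) t) (rho t)
                    + ip_Q Q pi (gradX (phi t)) (m t))
        = ip_pi pi (phi 1) rhoB - ip_pi pi (phi 0) rhoA)).

Definition hstep (N : nat) : R := N%:R^-1.
Definition tgrid (N i : nat) : R := i%:R / N%:R.
Definition in_cell (N i : nat) (t : R) : bool := tgrid N i <= t < tgrid N i.+1.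
(* index i of the cell I_i containing t (t = 1 is put in the last cell) *)
Definition cell (N : nat) (t : R) : nat := minn (Num.truncn (N%:R * t)) N.-1.

Definition V1n (N : nat) (f : R -> X -> R) : Prop :=
  (forall x, {within I01, continuous (fun t => f t x)}) /\
  forall i, (i < N)%N -> exists a b : X -> R,
    forall t, in_cell N i t -> forall x, f t x = a x + b x * t.
Definition V0e (N : nat) (f : R -> X -> X -> R) : Prop :=
  forall i, (i < N)%N -> forall s t, in_cell N i s -> in_cell N i t -> f s = f t.

Definition CEh (Q : X -> X -> R) (N : nat) (rhoA rhoB : X -> R)
    (rh : R -> X -> R) (mh : R -> X -> X -> R) : Prop :=
  ((V1n N rh) /\ (V0e N mh) /\ (rh (tgrid N 0) = rhoA) /\ (rh (tgrid N N) = rhoB) /\ (forall i, (i < N)%N -> forall x, (rh (tgrid N i.+1) x - rh (tgrid N i) x) / hstep N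
        + divX Q (mh (tgrid N i)) x = 0)).

Definition avg (N : nat) (f : R -> R) : R -> R := fun t =>
  Rintegral (@lebesgue_measure R) `[tgrid N (cell N t), tgrid N (cell N t).+1[ f
  / hstep N.
Definition avg_n (N : nat) (f : R -> X -> R) : R -> X -> R :=
  fun t x => avg N (fun s => f s x) t.
Definition avg_e (N : nat) (f : R -> X -> X -> R) : R -> X -> X -> R :=
  fun t x y => avg N (fun s => f s x y) t.

Definition interp (N : nat) (rho : R -> X -> R) : R -> X -> R := fun t x =>
  rho (tgrid N (cell N t)) x
  + (t - tgrid N (cell N t)) / hstep N
    * (rho (tgrid N (cell N t).+1) x - rho (tgrid N (cell N t)) x).

Definition action_h (Q : X -> X -> R) (pi : X -> R) (th : R -> R -> R) (N : nat)
    (rh : R -> X -> R) (mh : R -> X -> X -> R) : \bar R :=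
  action Q pi th (avg_n N rh) (avg_e N mh).

End Defs.

(* Let f = rhoA - 1, which has pi-mean zero.  For an irreducible reversible Q
   the kernel of the graph Laplacian (L psi)(x) = sum_y Q(x,y) (psi x - psi y)
   is the constants, so its range is the pi-mean-zero functions and f = L psi
   with |psi| bounded linearly in sum |f| <= sum (1/pi + 1).  The flux
   M(x,y) = psi(y) - psi(x) then has div M = f and |M| <= B uniformly in rhoA.

   Take rho(t) = rhoA + t^2 (1 - rhoA) = (1 - t^2) rhoA + t^2 and m(t) = 2 t M,
   so that d/dt rho + div m = 0.  As rho(t) >= t^2 and theta is monotone with
   theta(s,s) = s, alpha(rho(t,x), rho(t,y), m(t,x,y)) <= (2 t M)^2 / t^2
   <= 4 B^2.  On a grid cell [u, v] the averages are (rho(u) + rho(v)) / 2 >=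
   (u^2 + v^2) / 2 and (u + v) M, and (u + v)^2 <= 2 (u^2 + v^2) gives the same
   bound.  The interpolant of rho is rhoA + c(t) (1 - rhoA), where c is the
   piecewise linear interpolant of t^2; it is continuous because on [0, 1] c is
   the maximum of the chords of t^2 over all cells. *)

From HB Require Import structures.
From mathcomp Require Import all_boot all_order all_algebra.
From mathcomp Require Import all_classical all_reals all_analysis.
From mathcomp Require Import ring lra zify measurable_realfun.
Import Order.TTheory GRing.Theory Num.Theory.
Import numFieldNormedType.Exports.
Set Implicit Arguments.
Unset Strict Implicit.
Unset Printing Implicit Defensive.
Local Open Scope classical_set_scope.
Local Open Scope ring_scope.

Section Laplacian.
Variables (R : realFieldType) (X : finType) (Q : X -> X -> R) (pi : X -> R).
Hypothesis Q_ge0 : forall x y, 0 <= Q x y.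
Hypothesis Q_irreducible : forall x y, connect [rel a b | 0 < Q a b] x y.
Hypothesis pi_gt0 : forall x, 0 < pi x.
Hypothesis Q_reversible : forall x y, pi x * Q x y = pi y * Q y x.

Definition laplacian (psi : X -> R) (x : X) : R := \sum_y Q x y * (psi x - psi y).

Lemma laplacian_energy psi :
  2 * \sum_x pi x * psi x * laplacian psi x =
  \sum_x \sum_y pi x * Q x y * (psi x - psi y) ^+ 2.
Proof.
have swap : \sum_x pi x * psi x * laplacian psi x =
    \sum_x \sum_y pi x * Q x y * (psi y * (psi y - psi x)).
  rewrite exchange_big /=; apply: eq_bigr => x _.
  rewrite /laplacian mulr_sumr; apply: eq_bigr => y _.
  by rewrite Q_reversible; ring.
rewrite mulr2n mulrDl mul1r {2}swap -big_split /=; apply: eq_bigr => x _.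
rewrite /laplacian mulr_sumr -big_split /=; apply: eq_bigr => y _; ring.
Qed.

Lemma laplacian_eq0_const psi :
  (forall x, laplacian psi x = 0) -> forall x y, psi x = psi y.
Proof.
move=> L0.
have term_ge0 x y : 0 <= pi x * Q x y * (psi x - psi y) ^+ 2.
  by rewrite mulr_ge0 ?sqr_ge0 // mulr_ge0 // ltW.
have energy0 : \sum_x \sum_y pi x * Q x y * (psi x - psi y) ^+ 2 = 0.
  by rewrite -laplacian_energy big1 ?mulr0 // => x _; rewrite L0 mulr0.
have edge x y : 0 < Q x y -> psi x = psi y.
  move=> Qxy; apply/eqP; move/eqP: energy0.
  rewrite psumr_eq0 => [/allP/(_ x (mem_index_enum x))|]; last first.
    by move=> a _; apply: sumr_ge0 => b _.
  rewrite psumr_eq0 // => /allP/(_ y (mem_index_enum y)).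
  by rewrite mulf_eq0 (gt_eqF (mulr_gt0 (pi_gt0 x) Qxy)) sqrf_eq0 subr_eq0.
move=> x y; have /connectP [p path_p ->] := Q_irreducible x y.
elim: p x path_p => [|z p IHp] x //= /andP [Qxz path_p].
by rewrite (edge _ _ Qxz) IHp.
Qed.

Local Notation n := #|X|.
Local Notation idx := (@enum_val X predT).

Definition laplacian_mx : 'M[R]_n :=
  \matrix_(i, j) ((i == j)%:R * \sum_y Q (idx j) y - Q (idx j) (idx i)).

Lemma laplacian_mxE (psi : X -> R) j :
  ((\row_i psi (idx i)) *m laplacian_mx) 0 j = laplacian psi (idx j).
Proof.
rewrite !mxE /laplacian.
under eq_bigr do rewrite !mxE mulrBr.
rewrite sumrB (bigD1 j) //= eqxx mul1r [X in _ + X - _]big1 ?addr0; last first.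
  by move=> i /negbTE->; rewrite mul0r mulr0.
rewrite -(big_enum_val (fun y => psi y * Q (idx j) y)) /=.
by rewrite mulr_sumr -sumrB; apply: eq_bigr => y _; ring.
Qed.

Lemma kermx_laplacian_mx : (kermx laplacian_mx <= (const_mx 1 : 'rV[R]_n))%MS.
Proof.
apply/row_subP => k; set r := row k (kermx laplacian_mx).
have rL : r *m laplacian_mx = 0 by apply/eqP; rewrite -sub_kermx row_sub.
clearbody r; pose psi x := r 0 (enum_rank x).
have rE : r = \row_i psi (idx i) by apply/rowP => i; rewrite !mxE /psi enum_valK.
have psi_const : forall x y, psi x = psi y.
  apply: laplacian_eq0_const => x.
  by rewrite -(enum_rankK x) -laplacian_mxE -rE rL mxE.
have [x0 _ | X0] := pickP (@predT X).
  rewrite (_ : r = r 0 (enum_rank x0) *: const_mx 1) ?scalemx_sub //.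
  by apply/rowP => j; rewrite !mxE mulr1; have := psi_const (idx j) x0; rewrite /psi enum_valK.
by rewrite (_ : r = 0) ?sub0mx //; apply/rowP => j; have := X0 (idx j).
Qed.

Definition pi_col : 'cV[R]_n := \col_i pi (idx i).

Lemma laplacian_mx_pi : laplacian_mx *m pi_col = 0.
Proof.
apply/matrixP => i k; rewrite !mxE.
under eq_bigr do rewrite !mxE mulrBl.
rewrite sumrB (bigD1 i) //= eqxx mul1r [X in _ + X - _]big1 ?addr0; last first.
  by move=> j; rewrite eq_sym => /negbTE->; rewrite !mul0r.
rewrite -(big_enum_val (fun y => Q y (idx i) * pi y)) /= mulr_suml -sumrB.
by rewrite big1 // => y _; rewrite mulrC Q_reversible mulrC subrr.
Qed.

Lemma kermx_pi_sub_laplacian_mx : (kermx pi_col <= laplacian_mx)%MS.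
Proof.
have L_sub : (laplacian_mx <= kermx pi_col)%MS by rewrite sub_kermx laplacian_mx_pi.
have rank_L : (n - 1 <= \rank laplacian_mx)%N.
  have := (mxrank_leqif_sup kermx_laplacian_mx).1.
  rewrite mxrank_ker; have := rank_leq_row (const_mx 1 : 'rV[R]_n).
  by have := rank_leq_col laplacian_mx; lia.
have rank_p : (\rank (kermx pi_col) <= n - 1)%N.
  rewrite mxrank_ker.
  have [x0 _ | X0] := pickP (@predT X); last by move: (\rank pi_col) (eq_card0 X0) => rk ->.
  suff : pi_col != 0 by rewrite -mxrank_eq0; lia.
  apply/eqP => /matrixP/(_ (enum_rank x0) 0).
  by rewrite !mxE enum_rankK => /eqP; rewrite (gt_eqF (pi_gt0 _)).
have [_ <-] := mxrank_leqif_sup L_sub.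
by apply/eqP; have := (mxrank_leqif_sup L_sub).1; lia.
Qed.

Lemma poisson_bounded : exists2 B : R, 0 <= B &
  forall f : X -> R, \sum_x pi x * f x = 0 ->
  exists2 psi : X -> R, forall x, laplacian psi x = f x &
    forall x, `|psi x| <= B * \sum_z `|f z|.
Proof.
set P := pinvmx laplacian_mx.
exists (\sum_i \sum_k `|P i k|); first by apply: sumr_ge0 => i _; apply: sumr_ge0.
move=> f f_mean0; set u : 'rV[R]_n := \row_i f (idx i).
have u_sub : (u <= laplacian_mx)%MS.
  apply: submx_trans kermx_pi_sub_laplacian_mx; rewrite sub_kermx.
  apply/eqP/matrixP => i k; rewrite !mxE -[RHS]f_mean0.
  under eq_bigr do rewrite !mxE.
  by rewrite -(big_enum_val (fun y => f y * pi y)) /=; apply: eq_bigr => x _; rewrite mulrC.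
have uPL : u *m P *m laplacian_mx = u by exact: mulmxKpV.
clearbody P; pose psi x := (u *m P) 0 (enum_rank x).
have psiE : \row_i psi (idx i) = u *m P by apply/rowP => i; rewrite mxE /psi enum_valK.
exists psi => x.
  by rewrite -(enum_rankK x) -laplacian_mxE psiE uPL mxE.
rewrite /psi mxE; apply: le_trans (ler_norm_sum _ _ _) _.
rewrite (big_enum_val (fun z => `|f z|)) /= mulr_sumr; apply: ler_sum => i _.
rewrite normrM mulrC !mxE; apply: ler_wpM2r => //.
rewrite (bigD1 i) //= (bigD1 (enum_rank x)) //= -addrA ler_wpDr //.
by rewrite addr_ge0 ?sumr_ge0 // => j _; rewrite sumr_ge0.
Qed.

End Laplacian.

Section Calculus.
Context {R : realType}.
Local Notation mu := (@lebesgue_measure R).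

Lemma is_derive_bigsum (I : Type) (s : seq I) (h : I -> R -> R) (dh : I -> R) (t : R) :
  (forall i, is_derive t (1 : R) (h i) (dh i)) ->
  is_derive t (1 : R) (fun u => \sum_(i <- s) h i u) (\sum_(i <- s) dh i).
Proof.
move=> dh_h; elim: s => [|i s IHs].
  by under eq_fun do rewrite big_nil; rewrite big_nil; exact: is_derive_cst.
under eq_fun do rewrite big_cons; rewrite big_cons; exact: is_deriveD.
Qed.

Lemma continuous_bigsum (I : Type) (s : seq I) (h : I -> R -> R) (t : R) :
  (forall i, {for t, continuous (h i)}) ->
  {for t, continuous (fun u => \sum_(i <- s) h i u)}.
Proof.
move=> ch; elim: s => [|i s IHs].
  have -> : (fun u => \sum_(i <- [::]) h i u) = cst 0 by apply/funext => u; rewrite big_nil.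
  exact: cst_continuous.
have -> : (fun u => \sum_(j <- i :: s) h j u) = h i + (fun u => \sum_(j <- s) h j u).
  by apply/funext => u; rewrite big_cons.
exact: continuousD.
Qed.

Lemma is_derive_quadratic (a b c t : R) :
  is_derive t 1 (fun s => a + b * s + c * s ^+ 2) (b + 2 * c * t).
Proof.
have d := is_deriveD (is_deriveD (is_derive_cst a t 1) (is_deriveZ b (is_derive_id t 1)))
  (is_deriveZ c (is_deriveX 2 (is_derive_id t 1))).
have -> : (fun s => a + b * s + c * s ^+ 2) = cst a + b \*: id + c \*: id ^+ 2.
  by apply/funext => s; rewrite !fctE.
by apply: is_derive_eq d _; rewrite /GRing.scale /= expr1; ring.
Qed.

Lemma continuous_quadratic (a b c : R) : continuous (fun s => a + b * s + c * s ^+ 2).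
Proof.
move=> t; apply: differentiable_continuous; apply/derivable1_diffP.
by have [] := is_derive_quadratic a b c t.
Qed.

Lemma Rintegral_derive (F f : R -> R) (a b : R) : a < b ->
  (forall t : R, is_derive t (1 : R) F (f t)) -> continuous f ->
  Rintegral mu `[a, b] f = F b - F a.
Proof.
move=> ab dF cf.
have cF : continuous F.
  by move=> t; apply: differentiable_continuous; apply/derivable1_diffP; have [] := dF t.
rewrite /Rintegral (@continuous_FTC2 R f F a b ab) //.
- exact: continuous_subspaceT.
- split.
  + by move=> t _; have [] := dF t.
  + by apply: cvg_at_right_filter; exact: cF.
  + by apply: cvg_at_left_filter; exact: cF.
- by move=> t _; rewrite derive1E; apply: derive_val.
Qed.

(* No measurability is needed: the integral of a nonnegative function is the
   supremum of the integrals of the simple functions below it. *)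
Lemma ge0_le_integral_nomeas (D : set R) (f g : R -> \bar R) :
  (forall x, D x -> (0 <= f x)%E) -> (forall x, D x -> (f x <= g x)%E) ->
  (\int[mu]_(x in D) f x <= \int[mu]_(x in D) g x)%E.
Proof.
move=> f0 fg.
have g0 x : D x -> (0 <= g x)%E by move=> Dx; exact: le_trans (f0 x Dx) (fg x Dx).
rewrite !ge0_integralE //; apply: le_ereal_sup => _ [h /= hf <-]; exists h => //= x.
apply: le_trans (hf x) _; rewrite /patch; case: ifP => // /set_mem Dx; exact: fg.
Qed.

Lemma Rintegral_affine (a b p q : R) (g : R -> R) : a < b ->
  (forall s, a <= s < b -> g s = p + q * s) ->
  Rintegral mu `[a, b[ g = (b - a) * (p + q * ((a + b) / 2)).
Proof.
move=> ab gE.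
have cg : continuous (fun s => p + q * s + 0 * s ^+ 2) by exact: continuous_quadratic.
have -> : Rintegral mu `[a, b[ g = Rintegral mu `[a, b[ (fun s => p + q * s + 0 * s ^+ 2).
  by apply: eq_Rintegral => s; rewrite inE /= in_itv /= => /gE ->; rewrite mul0r addr0.
rewrite Rintegral_itv_bndo_bndc; last first.
  apply: (@integrableS _ _ _ mu `[a, b]) => //; first exact: subset_itv_co_cc.
  by apply: continuous_compact_integrable; [exact: segment_compact | exact: continuous_subspaceT].
have dF (t : R) : is_derive t (1 : R) (fun s => 0 + p * s + q / 2 * s ^+ 2)
                               (p + q * t + 0 * t ^+ 2).
  by apply: is_derive_eq (is_derive_quadratic 0 p (q / 2) t) _; field.
by rewrite (Rintegral_derive ab dF cg); field.
Qed.

Lemma continuous_integrable_I01 (g : R -> R) : continuous g ->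
  measurable_fun I01 g /\ mu.-integrable I01 (fun t => (g t)%:E).
Proof.
move=> cg; split.
  exact: measurable_funS measurableT (@subsetT _ _) (continuous_measurable_fun cg).
by apply: continuous_compact_integrable; [exact: segment_compact | exact: continuous_subspaceT].
Qed.

End Calculus.

Section Grid.
Context {R : realType} {X : finType}.
Variable N : nat.
Hypothesis N_gt0 : (0 < N)%N.

Lemma hstep_gt0 : 0 < hstep N :> R.
Proof. by rewrite invr_gt0 ltr0n. Qed.

Lemma hstep_neq0 : hstep N != 0 :> R.
Proof. by rewrite gt_eqF // hstep_gt0. Qed.

Lemma tgridS i : tgrid N i.+1 = tgrid N i + hstep N :> R.
Proof. by rewrite /tgrid /hstep -natr1 mulrDl div1r. Qed.

Lemma tgrid0 : tgrid N 0 = 0 :> R.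
Proof. by rewrite /tgrid mul0r. Qed.

Lemma tgridN : tgrid N N = 1 :> R.
Proof. by rewrite /tgrid divff // pnatr_eq0 -lt0n. Qed.

Lemma tgrid_ge0 i : 0 <= tgrid N i :> R.
Proof. exact: divr_ge0. Qed.

Lemma tgrid_le i j : (i <= j)%N -> tgrid N i <= tgrid N j :> R.
Proof. by move=> ij; rewrite ler_pM2r ?invr_gt0 ?ltr0n // ler_nat. Qed.

Lemma tgrid_le1 i : (i <= N)%N -> tgrid N i <= 1 :> R.
Proof. by move=> iN; rewrite -tgridN tgrid_le. Qed.

Lemma cell_lt (t : R) : (cell N t < N)%N.
Proof. by rewrite /cell; lia. Qed.

Lemma cell_eq c (t : R) : (c < N)%N -> in_cell N c t -> cell N t = c.
Proof.
move=> cN /andP[tc_le t_lt]; rewrite /cell.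
suff -> : Num.truncn (N%:R * t) = c by lia.
apply: truncn_def; rewrite mulrC -ler_pdivrMr ?ltr0n // -ltr_pdivlMr ?ltr0n //.
by rewrite tc_le t_lt.
Qed.

Lemma cell_tgrid j : (j < N)%N -> cell N (tgrid N j : R) = j.
Proof.
move=> jN; apply: cell_eq => //; rewrite /in_cell lexx /=.
by rewrite ltr_pM2r ?invr_gt0 ?ltr0n // ltr_nat.
Qed.

Lemma cell_tgridN : cell N (tgrid N N : R) = N.-1.
Proof. by rewrite /cell tgridN mulr1 natrK; lia. Qed.

Lemma cell_bounds (t : R) : 0 <= t <= 1 ->
  tgrid N (cell N t) <= t <= tgrid N (cell N t).+1.
Proof.
move=> /andP[t_ge0 t_le1]; rewrite /cell.
have /andP[tr_le lt_tr] := truncn_itv (mulr_ge0 (ler0n _ N) t_ge0).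
rewrite /tgrid ler_pdivrMr ?ler_pdivlMr ?ltr0n // ![t * _]mulrC.
have [le_tr | lt_tr'] := leqP (Num.truncn (N%:R * t)) N.-1.
  by rewrite tr_le ltW.
rewrite prednK // ler_piMr ?ler0n // andbT (le_trans _ tr_le) // ler_nat; exact: ltnW.
Qed.

Lemma avg_affine (g : R -> R) (p q t : R) :
  (forall s, in_cell N (cell N t) s -> g s = p + q * s) ->
  avg N g t = p + q * ((tgrid N (cell N t) + tgrid N (cell N t).+1) / 2).
Proof.
move=> gE; rewrite /avg (@Rintegral_affine _ _ _ p q) ?tgridS ?ltrDl ?hstep_gt0 //.
  by field; exact: hstep_neq0.
by move=> s; rewrite -tgridS; exact: gE.
Qed.

Lemma avg_idem (g : R -> R) : avg N (avg N g) =1 avg N g.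
Proof.
move=> t; rewrite (@avg_affine _ (avg N g t) 0) ?mul0r ?addr0 // => s.
by rewrite mul0r addr0 /avg => /(cell_eq (cell_lt t)) ->.
Qed.

Lemma interp_in_cell (rho : R -> X -> R) c s x : (c < N)%N -> in_cell N c s ->
  interp N rho s x =
  rho (tgrid N c) x + (s - tgrid N c) / hstep N * (rho (tgrid N c.+1) x - rho (tgrid N c) x).
Proof. by move=> cN /(cell_eq cN) sc; rewrite /interp sc. Qed.

Lemma interp_tgrid (rho : R -> X -> R) j : (j <= N)%N ->
  interp N rho (tgrid N j) = rho (tgrid N j).
Proof.
move=> jN; apply/funext => x; rewrite /interp.
have [jN' | Nj] := ltnP j N; first by rewrite cell_tgrid // subrr !mul0r addr0.
have -> : j = N by lia.
have tgridN' : tgrid N N = tgrid N N.-1 + hstep N :> R by rewrite -tgridS prednK.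
rewrite cell_tgridN prednK // tgridN' addrAC subrr add0r divff ?hstep_neq0 //.
by rewrite mul1r addrC subrK.
Qed.

Lemma interp_affine (rho : R -> X -> R) c : (c < N)%N -> exists a b : X -> R,
  forall s, in_cell N c s -> forall x, interp N rho s x = a x + b x * s.
Proof.
move=> cN; pose b x := (rho (tgrid N c.+1) x - rho (tgrid N c) x) / hstep N.
exists (fun x => rho (tgrid N c) x - tgrid N c * b x), b => s sc x.
by rewrite (interp_in_cell _ _ cN sc) /b; field; exact: hstep_neq0.
Qed.

Lemma avg_interp (rho : R -> X -> R) t x :
  avg_n N (interp N rho) t x =
  (rho (tgrid N (cell N t)) x + rho (tgrid N (cell N t).+1) x) / 2.
Proof.
set c := cell N t; set a := tgrid N c; set D := rho (tgrid N c.+1) x - rho a x.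
rewrite /avg_n (@avg_affine _ (rho a x - a * D / hstep N) (D / hstep N)); last first.
  move=> s sc; rewrite (interp_in_cell _ _ (cell_lt t) sc) -/a -/D.
  by field; exact: hstep_neq0.
rewrite -/c -/a -[rho (tgrid N c.+1) x](subrK (rho a x)) -/D tgridS -/a.
by field; exact: hstep_neq0.
Qed.

Lemma avg_e_V0e (m : R -> X -> X -> R) : V0e N (avg_e N m).
Proof.
move=> i iN s t si ti; apply/funext => x; apply/funext => y.
by rewrite /avg_e /avg (cell_eq iN si) (cell_eq iN ti).
Qed.

End Grid.

Section Alpha.
Context {R : realType}.
Variable th : R -> R -> R.
Hypothesis th_mono : forall s s' t, 0 <= s -> s <= s' -> 0 <= t ->
  th s t <= th s' t /\ th t s <= th t s'.
Hypothesis th_diag : forall s, 0 <= s -> th s s = s.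

Lemma alpha_ge0 a b m : (0 <= alpha th a b m)%E.
Proof.
rewrite /alpha; case: ifP => // _; case: ifP => [th_gt0 | _].
  by rewrite lee_fin divr_ge0 ?sqr_ge0 ?ltW.
by case: ifP.
Qed.

Lemma alpha0 a b : 0 <= a -> 0 <= b -> alpha th a b 0 = 0%E.
Proof.
move=> a_ge0 b_ge0; rewrite /alpha a_ge0 b_ge0 eqxx expr0n /= mul0r.
by case: ifP.
Qed.

Lemma alpha_le_div a b m s : 0 < s -> s <= a -> s <= b ->
  (alpha th a b m <= (m ^+ 2 / s)%:E)%E.
Proof.
move=> s_gt0 sa sb; have s_ge0 := ltW s_gt0.
have a_ge0 := le_trans s_ge0 sa; have b_ge0 := le_trans s_ge0 sb.
have s_le_th : s <= th a b.
  rewrite -{1}(th_diag s_ge0); apply: le_trans (th_mono s_ge0 sb s_ge0).2 _.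
  exact: (th_mono s_ge0 sa b_ge0).1.
rewrite /alpha a_ge0 b_ge0 /= (lt_le_trans s_gt0 s_le_th) lee_fin.
by rewrite ler_wpM2l ?sqr_ge0 // lef_pV2 ?posrE // (lt_le_trans s_gt0 s_le_th).
Qed.

(* Stated for the cell averages of the trajectory over a grid cell [u, v];
   the trajectory itself is the case u = v = t. *)
Lemma alpha_sum_mul_le a b u v M B :
  (u ^+ 2 + v ^+ 2) / 2 <= a -> (u ^+ 2 + v ^+ 2) / 2 <= b -> `|M| <= B ->
  (alpha th a b ((u + v) * M) <= (4 * B ^+ 2)%:E)%E.
Proof.
move=> ua ub MB; have uv_ge0 : 0 <= (u ^+ 2 + v ^+ 2) / 2.
  by rewrite divr_ge0 // addr_ge0 ?sqr_ge0.
have [uv0 | uv_gt0] := eqVneq ((u ^+ 2 + v ^+ 2) / 2) 0.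
  have [u0 v0] : u = 0 /\ v = 0 by move: uv0; nra.
  by rewrite u0 v0 addr0 mul0r alpha0 ?(le_trans uv_ge0) // lee_fin mulr_ge0 ?sqr_ge0.
have uv_pos : 0 < (u ^+ 2 + v ^+ 2) / 2 by rewrite lt_def uv_gt0.
apply: le_trans (alpha_le_div _ uv_pos ua ub) _; rewrite lee_fin ler_pdivrMr //.
have M2B : M ^+ 2 <= B ^+ 2 by rewrite -real_normK ?num_real // lerXn2r ?nnegrE ?(le_trans _ MB).
by rewrite exprMn; have := sqr_ge0 (u - v); have := sqr_ge0 M; nra.
Qed.

End Alpha.

Section Flux.
Context {R : realType} {X : finType}.
Variables (Q : X -> X -> R) (pi : X -> R).

Lemma divXZ (c : R) (F : X -> X -> R) x :
  divX Q (fun a b => c * F a b) x = c * divX Q F x.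
Proof. by rewrite /divX !mulr_sumr; apply: eq_bigr => y _; ring. Qed.

Lemma divX_laplacian (psi : X -> R) x :
  divX Q (fun a b => psi b - psi a) x = laplacian Q psi x.
Proof. by rewrite /divX /laplacian mulr_sumr; apply: eq_bigr => y _; field. Qed.

Hypothesis Q_reversible : forall x y, pi x * Q x y = pi y * Q y x.

Lemma ip_Q_gradX (g : X -> R) (F : X -> X -> R) :
  ip_Q Q pi (gradX g) F = - \sum_x g x * pi x * divX Q F x.
Proof.
have swap : \sum_x \sum_y g x * F y x * Q x y * pi x =
            \sum_x \sum_y g y * F x y * Q x y * pi x.
  rewrite exchange_big /=; apply: eq_bigr => x _; apply: eq_bigr => y _.
  by rewrite -!mulrA [Q y x * _]mulrC -Q_reversible; ring.
have -> : \sum_x g x * pi x * divX Q F x =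
    2^-1 * (\sum_x \sum_y g x * F y x * Q x y * pi x - \sum_x \sum_y g x * F x y * Q x y * pi x).
  rewrite -sumrB mulr_sumr; apply: eq_bigr => x _.
  by rewrite /divX -sumrB !mulr_sumr; apply: eq_bigr => y _; ring.
rewrite swap /ip_Q /gradX -mulrN opprB -sumrB; congr (_ * _); apply: eq_bigr => x _.
by rewrite -sumrB; apply: eq_bigr => y _; ring.
Qed.

End Flux.

Section ActionBound.
Context {R : realType} {X : finType}.
Variables (Q : X -> X -> R) (pi : X -> R) (th : R -> R -> R).
Hypothesis Q_ge0 : forall x y, 0 <= Q x y.
Hypothesis pi_ge0 : forall x, 0 <= pi x.

Definition edge_mass : R := \sum_x \sum_y Q x y * pi x.

Lemma action_le (rho : R -> X -> R) (m : R -> X -> X -> R) (K : R) :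
  (forall t, 0 <= t <= 1 -> forall x y, (alpha th (rho t x) (rho t y) (m t x y) <= K%:E)%E) ->
  (action Q pi th rho m <= (2^-1 * (K * edge_mass))%:E)%E.
Proof.
move=> alpha_le; rewrite /action EFinM lee_wpmul2l ?lee_fin ?invr_ge0 //.
have Qpi_ge0 x y : (0 <= (Q x y * pi x)%:E)%E by rewrite lee_fin mulr_ge0.
apply: (@le_trans _ _ (\int[@lebesgue_measure R]_(t in I01) (K * edge_mass)%:E)%E).
  apply: ge0_le_integral_nomeas => [t _ | t t01].
    by rewrite sume_ge0 // => x _; rewrite sume_ge0 // => y _; rewrite mule_ge0 ?alpha_ge0.
  rewrite /edge_mass mulr_sumr -sumEFin lee_sum // => x _.
  rewrite mulr_sumr -sumEFin lee_sum // => y _.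
  rewrite [X in (_ <= X)%E]EFinM; apply: lee_wpmul2r => //.
  by apply: alpha_le; move: t01; rewrite /I01 /= in_itv.
rewrite integral_cst /I01; last exact: measurable_itv.
have I01_measure : lebesgue_measure (`[0%R, 1%R] : set R) = 1%E.
  by rewrite lebesgue_measure_itv /= lte01 oppr0 adde0.
by rewrite -[X in (_ * X)%E]/(lebesgue_measure (`[0%R, 1%R] : set R)) I01_measure mule1.
Qed.

End ActionBound.

Section DensityFlux.
Context {R : realType} {X : finType}.
Variables (Q : X -> X -> R) (pi : X -> R).
Hypothesis Q_ge0 : forall x y, 0 <= Q x y.
Hypothesis Q_irreducible : forall x y, connect [rel a b | 0 < Q a b] x y.
Hypothesis pi_gt0 : forall x, 0 < pi x.
Hypothesis pi_mass : \sum_x pi x = 1.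
Hypothesis Q_reversible : forall x y, pi x * Q x y = pi y * Q y x.

Lemma density_le_inv_pi rhoA x : density pi rhoA -> rhoA x <= (pi x)^-1.
Proof.
move=> [rhoA_ge0 rhoA_mass]; rewrite -[X in _ <= X]mulr1 ler_pdivlMl //.
rewrite -rhoA_mass (bigD1 x) //= lerDl sumr_ge0 // => y _.
by rewrite mulr_ge0 // ltW.
Qed.

Lemma density_flux_bounded : exists B : R,
  forall rhoA, density pi rhoA -> exists2 M : X -> X -> R,
    forall x, divX Q M x = rhoA x - 1 & forall x y, `|M x y| <= B.
Proof.
have [B B_ge0 poisson] := poisson_bounded Q_ge0 Q_irreducible pi_gt0 Q_reversible.
pose K := \sum_z ((pi z)^-1 + 1).
exists (2 * (B * K)).
move=> rhoA rhoA_density; have [rhoA_ge0 rhoA_mass] := rhoA_density.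
have mean0 : \sum_x pi x * (rhoA x - 1) = 0.
  by under eq_bigr do rewrite mulrBr mulr1; rewrite sumrB rhoA_mass pi_mass subrr.
have [psi L_psi psi_le] := poisson _ mean0.
exists (fun x y => psi y - psi x) => [x | x y]; first by rewrite divX_laplacian.
have psi_le' z : `|psi z| <= B * K.
  apply: le_trans (psi_le z) _; rewrite ler_wpM2l // ler_sum // => w _.
  rewrite (le_trans (ler_normB _ _)) // normr1 ger0_norm // lerD2r.
  exact: density_le_inv_pi.
by rewrite (le_trans (ler_normB _ _)) // mulr2n mulrDl mul1r lerD.
Qed.

End DensityFlux.

Section SquareInterpolation.
Context {R : realType}.
Variable N : nat.
Hypothesis N_gt0 : (0 < N)%N.

Definition chord (j : nat) (t : R) : R :=
  t * (tgrid N j + tgrid N j.+1) - tgrid N j * tgrid N j.+1.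

(* [t ^+ 2 - chord j t = (t - t_j) (t - t_(j+1))], which is nonpositive exactly
   on the j-th cell. *)
Lemma chord_le_cell c j t : tgrid N c <= t <= tgrid N c.+1 -> chord j t <= chord c t.
Proof.
move=> /andP[tc_le le_tc1].
have chordE k : chord k t = t ^+ 2 - (t - tgrid N k) * (t - tgrid N k.+1).
  by rewrite /chord; ring.
rewrite !chordE lerD2l lerN2.
have cell_le0 : (t - tgrid N c) * (t - tgrid N c.+1) <= 0.
  by rewrite mulr_ge0_le0 ?subr_ge0 ?subr_le0.
have [-> // | jc] := eqVneq j c; apply: le_trans cell_le0 _.
have le_jj1 : tgrid N j <= tgrid N j.+1 :> R by exact: tgrid_le.
have [lt_jc | lt_cj] := ltnP j c.
  have : tgrid N j.+1 <= tgrid N c :> R by exact: tgrid_le.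
  by move=> le_j1c; apply: mulr_ge0; rewrite subr_ge0; lra.
have : tgrid N c.+1 <= tgrid N j :> R by apply: tgrid_le; move: jc lt_cj; lia.
by move=> le_c1j; apply: mulr_le0; rewrite subr_le0; lra.
Qed.

Definition chord_max (t : R) : R := \big[Order.max/chord 0 t]_(j <- iota 0 N) chord j t.

Lemma chord_maxE t : 0 <= t <= 1 -> chord_max t = chord (cell N t) t.
Proof.
move=> t01; have c_bounds := cell_bounds N_gt0 t01.
apply/eqP; rewrite eq_le; apply/andP; split.
  by rewrite /chord_max; elim: (iota 0 N) => [|j s IHs];
    rewrite ?big_nil ?big_cons ?ge_max ?IHs chord_le_cell.
have : cell N t \in iota 0 N by rewrite mem_iota add0n cell_lt.
rewrite /chord_max; elim: (iota 0 N) => [//|j s IHs].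
by rewrite inE big_cons le_max => /orP[/eqP <- | /IHs ->]; rewrite ?lexx ?orbT.
Qed.

Lemma continuous_chord_max : continuous chord_max.
Proof.
have c_chord j : continuous (chord j).
  have -> : chord j = fun s =>
      - (tgrid N j * tgrid N j.+1) + (tgrid N j + tgrid N j.+1) * s + 0 * s ^+ 2.
    by apply/funext => s; rewrite /chord; ring.
  exact: continuous_quadratic.
rewrite /chord_max; elim: (iota 0 N) => [|j s IHs].
  have -> : (fun t => \big[Order.max/chord 0 t]_(j <- [::]) chord j t) = chord 0.
    by apply/funext => t; rewrite big_nil.
  exact: c_chord.
have -> : (fun t => \big[Order.max/chord 0 t]_(i <- j :: s) chord i t) =
    (chord j) \max (fun t => \big[Order.max/chord 0 t]_(i <- s) chord i t).
  by apply/funext => t; rewrite big_cons.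
by move=> t; apply: continuous_max; [exact: c_chord | exact: IHs].
Qed.

End SquareInterpolation.

Section Path.
Context {R : realType} {X : finType}.
Variables (Q : X -> X -> R) (pi : X -> R) (rhoA : X -> R) (M : X -> X -> R).

Definition rho_path (t : R) (x : X) : R := rhoA x + t ^+ 2 * (1 - rhoA x).
Definition m_path (t : R) (x y : X) : R := 2 * t * M x y.

Lemma is_derive_rho_path x t : is_derive t (1 : R) (rho_path^~ x) (2 * t * (1 - rhoA x)).
Proof.
have -> : rho_path^~ x = fun s => rhoA x + 0 * s + (1 - rhoA x) * s ^+ 2.
  by apply/funext => s; rewrite /rho_path; ring.
by apply: is_derive_eq (is_derive_quadratic _ _ _ _) _; ring.
Qed.

Lemma continuous_rho_path x : continuous (rho_path^~ x).
Proof.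
move=> t; apply: differentiable_continuous; apply/derivable1_diffP.
by have [] := is_derive_rho_path x t.
Qed.

Lemma continuous_m_path x y : continuous (fun t => m_path t x y).
Proof.
have -> : (fun t => m_path t x y) = fun t => 0 + 2 * M x y * t + 0 * t ^+ 2.
  by apply/funext => t; rewrite /m_path; ring.
exact: continuous_quadratic.
Qed.

Hypothesis rhoA_ge0 : forall x, 0 <= rhoA x.

Lemma rho_path_ge t x : 0 <= t <= 1 -> t ^+ 2 <= rho_path t x.
Proof.
move=> /andP[t_ge0 t_le1]; have t2_le1 : t ^+ 2 <= 1 by rewrite expr_le1.
have : 0 <= rhoA x * (1 - t ^+ 2) by rewrite mulr_ge0 ?subr_ge0.
by rewrite /rho_path; nra.
Qed.

Hypothesis Q_reversible : forall x y, pi x * Q x y = pi y * Q y x.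
Hypothesis div_M : forall x, divX Q M x = rhoA x - 1.

Lemma rho_path_weak_CE phi : test_fun phi ->
  Rintegral (@lebesgue_measure R) I01
    (fun t => ip_pi pi (fun x => derive1 (phi^~ x) t) (rho_path t)
              + ip_Q Q pi (gradX (phi t)) (m_path t))
  = ip_pi pi (phi 1) (fun _ => 1) - ip_pi pi (phi 0) rhoA.
Proof.
move=> phi_C1.
have dphi x t : is_derive t (1 : R) (phi^~ x) (derive1 (phi^~ x) t).
  by rewrite derive1E; apply: derivableP; exact: (phi_C1 x).1.
have c_phi x : continuous (phi^~ x).
  by move=> t; apply: differentiable_continuous; apply/derivable1_diffP; have [] := dphi x t.
set G := fun t => _ + _.
have GE : G = fun t => \sum_x
    (derive1 (phi^~ x) t * rho_path t x + phi t x * (2 * t * (1 - rhoA x))) * pi x.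
  apply/funext => t; rewrite /G ip_Q_gradX // /ip_pi -sumrN -big_split.
  by apply: eq_bigr => x _; rewrite /= /m_path divXZ div_M; ring.
have dH t : is_derive t (1 : R) (fun s => \sum_x phi s x * rho_path s x * pi x) (G t).
  rewrite GE; apply: is_derive_bigsum => x.
  have := is_deriveM (is_deriveM (dphi x t) (is_derive_rho_path x t)) (is_derive_cst (pi x) t 1).
  have -> : phi^~ x * rho_path^~ x * cst (pi x) = fun s => phi s x * rho_path s x * pi x.
    by apply/funext => s; rewrite !fctE.
  by move/is_derive_eq; apply; rewrite /GRing.scale /= /cst; ring.
have cG : continuous G.
  have c_lin x : continuous (fun s : R => 2 * s * (1 - rhoA x)).
    have -> : (fun s : R => 2 * s * (1 - rhoA x)) = fun s => 0 + 2 * (1 - rhoA x) * s + 0 * s ^+ 2.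
      by apply/funext => s; ring.
    exact: continuous_quadratic.
  rewrite GE => t; apply: continuous_bigsum => x; apply: continuousM; last exact: cst_continuous.
  apply: continuousD; apply: continuousM.
  - exact: (phi_C1 x).2.
  - exact: continuous_rho_path.
  - exact: c_phi.
  - exact: c_lin.
rewrite (Rintegral_derive ltr01 dH cG) /ip_pi.
by congr (_ - _); apply: eq_bigr => x _; rewrite /rho_path; ring.
Qed.

Lemma rho_path_CE : CE Q pi rhoA (fun _ => 1) rho_path m_path.
Proof.
split; [|split; [|split; [|split]]].
- by move=> x; exact: (continuous_integrable_I01 (continuous_rho_path (x := x))).1.
- by move=> x y; exact: (continuous_integrable_I01 (continuous_m_path (x := x) (y := y))).1.
- by move=> x; exact: (continuous_integrable_I01 (continuous_rho_path (x := x))).2.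
- by move=> x y; exact: (continuous_integrable_I01 (continuous_m_path (x := x) (y := y))).2.
- exact: rho_path_weak_CE.
Qed.

End Path.

Section PathBounds.
Context {R : realType} {X : finType}.
Variables (Q : X -> X -> R) (pi : X -> R) (th : R -> R -> R).
Variables (rhoA : X -> R) (M : X -> X -> R) (B : R).
Hypothesis Q_ge0 : forall x y, 0 <= Q x y.
Hypothesis pi_ge0 : forall x, 0 <= pi x.
Hypothesis th_mono : forall s s' t, 0 <= s -> s <= s' -> 0 <= t ->
  th s t <= th s' t /\ th t s <= th t s'.
Hypothesis th_diag : forall s, 0 <= s -> th s s = s.
Hypothesis rhoA_ge0 : forall x, 0 <= rhoA x.
Hypothesis div_M : forall x, divX Q M x = rhoA x - 1.
Hypothesis M_le : forall x y, `|M x y| <= B.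

Lemma alpha_path_le t : 0 <= t <= 1 -> forall x y,
  (alpha th (rho_path rhoA t x) (rho_path rhoA t y) (m_path M t x y) <= (4 * B ^+ 2)%:E)%E.
Proof.
move=> t01 x y; rewrite /m_path mulr_natl mulr2n.
have t2E : (t ^+ 2 + t ^+ 2) / 2 = t ^+ 2 by field.
by apply: alpha_sum_mul_le; rewrite ?t2E ?rho_path_ge.
Qed.

Lemma action_path_le :
  (action Q pi th (rho_path rhoA) (m_path M) <= (2^-1 * (4 * B ^+ 2 * edge_mass Q pi))%:E)%E.
Proof. exact: (action_le Q_ge0 pi_ge0 alpha_path_le). Qed.

Variable N : nat.
Hypothesis N_gt0 : (0 < N)%N.

Lemma interp_rho_path t x :
  interp N (rho_path rhoA) t x = rhoA x + chord N (cell N t) t * (1 - rhoA x).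
Proof. by rewrite /interp /rho_path /chord tgridS; field; exact: hstep_neq0. Qed.

Lemma interp_rho_path_V1n : V1n N (interp N (rho_path rhoA)).
Proof.
split=> [x | i iN]; last exact: interp_affine.
have c_max : continuous (cst (rhoA x) + chord_max N * cst (1 - rhoA x)).
  move=> t; apply: continuousD; first exact: cst_continuous.
  by apply: continuousM; [exact: continuous_chord_max | exact: cst_continuous].
apply: subspace_eq_continuous (continuous_subspaceT c_max).
move=> t; rewrite inE /I01 /= in_itv /= => t01.
by rewrite /from_subspace /= !fctE interp_rho_path chord_maxE.
Qed.

Lemma avg_m_path t x y :
  avg_e N (m_path M) t x y = (tgrid N (cell N t) + tgrid N (cell N t).+1) * M x y.
Proof.
by rewrite /avg_e (@avg_affine _ _ N_gt0 _ 0 (2 * M x y)) => [|s _]; rewrite /m_path; field.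
Qed.

Lemma rho_path_CEh : CEh Q N rhoA (fun _ => 1) (interp N (rho_path rhoA)) (avg_e N (m_path M)).
Proof.
split; first exact: interp_rho_path_V1n.
split; first exact: avg_e_V0e.
split.
  by rewrite interp_tgrid // tgrid0; apply/funext => x; rewrite /rho_path expr0n mul0r addr0.
split.
  by rewrite interp_tgrid // tgridN //; apply/funext => x; rewrite /rho_path expr1n mul1r addrC subrK.
move=> i iN x; rewrite !interp_tgrid // ?(ltnW iN) //.
have -> : avg_e N (m_path M) (tgrid N i) = fun a b => (tgrid N i + tgrid N i.+1) * M a b.
  by apply/funext => a; apply/funext => b; rewrite avg_m_path cell_tgrid.
by rewrite divXZ div_M /rho_path tgridS; field; exact: hstep_neq0.
Qed.

Lemma action_h_path_le :
  (action_h Q pi th N (interp N (rho_path rhoA)) (avg_e N (m_path M))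
     <= (2^-1 * (4 * B ^+ 2 * edge_mass Q pi))%:E)%E.
Proof.
apply: (action_le Q_ge0 pi_ge0) => t _ x y; rewrite /avg_e (avg_idem N_gt0) -/(avg_e N _ t x y).
rewrite !(avg_interp N_gt0) avg_m_path.
set u := tgrid N (cell N t); set v := tgrid N (cell N t).+1.
have lower z : (u ^+ 2 + v ^+ 2) / 2 <= (rho_path rhoA u z + rho_path rhoA v z) / 2.
  have u01 : 0 <= u <= 1 by rewrite tgrid_ge0 tgrid_le1 // ltnW // cell_lt.
  have v01 : 0 <= v <= 1 by rewrite tgrid_ge0 tgrid_le1 // cell_lt.
  by rewrite ler_pM2r // lerD ?rho_path_ge.
exact: alpha_sum_mul_le.
Qed.

End PathBounds.

Unset Implicit Arguments.

Theorem proposition3p3 (R : realType) (X : finType) (Q : X -> X -> R)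
    (pi : X -> R) (th : R -> R -> R) :
  markov_setting Q pi -> mean_fun th ->
  exists C : R, forall rhoA : X -> R, density pi rhoA ->
    exists (rho : R -> X -> R) (m : R -> X -> X -> R),
      ((CE Q pi rhoA (fun _ => 1) rho m) /\ ((forall x, {within I01, continuous (fun t => rho t x)})) /\ ((action Q pi th rho m <= C%:E)%E) /\ (forall N : nat, (0 < N)%N ->
            CEh Q N rhoA (fun _ => 1) (interp N rho) (avg_e N m) /\
            (action_h Q pi th N (interp N rho) (avg_e N m) <= C%:E)%E)).
Proof.
move=> [Q_ge0 [_ [Q_irr [pi_gt0 [pi_mass Q_rev]]]]].
move=> [_ [_ [_ [_ [_ [_ [th_diag [_ [_ th_mono]]]]]]]]].
have pi_ge0 x := ltW (pi_gt0 x).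
have [B flux] := density_flux_bounded Q_ge0 Q_irr pi_gt0 pi_mass Q_rev.
exists (2^-1 * (4 * B ^+ 2 * edge_mass Q pi)) => rhoA rhoA_density.
have [M div_M M_le] := flux rhoA rhoA_density.
have rhoA_ge0 := rhoA_density.1.
exists (rho_path rhoA), (m_path M); split; [|split; [|split]].
- exact: rho_path_CE.
- by move=> x; exact: continuous_subspaceT (continuous_rho_path (x := x)).
- exact: action_path_le.
- by move=> N N_gt0; split; [exact: rho_path_CEh | exact: action_h_path_le].
Qed.
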